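(* $\mathrm{nM}([2]) = \mathrm{nM}(\mathrm{N}) = \mathrm{N}$, where $[2]$ denotes the function $f : \mathbb{N} \to \mathbb{N}\cup\{+\infty\}$ with $f(1) = 2$ and $f(k) = +\infty$ for $k \ge 2$.
   Context: $\mathrm{N} : \mathbb{N} \to \mathbb{N}$ is defined by $\mathrm{N}(1) = 2$ and $\mathrm{N}(k) = \max_{i \in \{2,\dots,k\}} \min(2i, \mathrm{N}(k-i+1)+i)$ for $k \ge 2$. For a function $g : \mathbb{N} \to \mathbb{N} \cup \{+\infty\}$ and $k \ge 2$, $m \ge 4$, let $\mathrm{pdp}_g(k,m)$ be the set of pairs $(e_0,e_1) \in \mathbb{N}^2$ with (i) $e_0, e_1 \ge 2$; (ii) $e_0, e_1 \le k$; (iii) $e_0 + e_1 = m$; (iv) $e_0 \le e_1$; (v) $g(k - e_\varepsilon + 1) + e_\varepsilon \ge m$ for both $\varepsilon \in \{0,1\}$ (this only depends on the values $g(k')$ for $k' < k$). For $f : \mathbb{N} \to \mathbb{N} \cup \{+\infty\}$ with $f(1) = 2$, the function $f' = \mathrm{nM}(f)$ is defined recursively: $f'(1) = 2$, and for $k > 1$, with $m$ the largest integer in $\{4, \dots, 2k\}$ such that $\mathrm{pdp}_{f'}(k,m) \ne \emptyset$ (using the already defined values $f'(k')$, $k' < k$; note $(2,2) \in \mathrm{pdp}_{f'}(k,4)$), set $f'(k) = \min(m, f(k))$. *)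

From mathcomp Require Import all_boot.
Set Implicit Arguments. Unset Strict Implicit. Unset Printing Implicit Defensive.

(* N ∪ {+oo} : [Some n] is the finite value n, [None] is +oo. *)
Definition natinf := option nat.

(* Course-of-values recursion on nat: [step g k] computes the value at k,
   where it may only use [g k'] for k' < k.  [tab step n] lists the
   values at 0, ..., n-1; [crec step k] is the value at k. *)
Fixpoint tab (T : Type) (d : T) (step : (nat -> T) -> nat -> T) (n : nat)
  : seq T :=
  match n with
  | 0 => [::]
  | n'.+1 => let s := tab d step n' in rcons s (step (fun j => nth d s j) n')
  end.

Definition crec (T : Type) (d : T) (step : (nat -> T) -> nat -> T) (k : nat)
  : T := nth d (tab d step k.+1) k.

(* The function N (domain: positive integers; the value at 0 is irrelevant):
   N(1) = 2, N(k) = max_{i in {2..k}} min(2i, N(k-i+1)+i) for k >= 2. *)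
Definition N_step (g : nat -> nat) (k : nat) : nat :=
  if k <= 1 then 2
  else \max_(2 <= i < k.+1) minn (2 * i) (g (k - i + 1) + i).

Definition Nfun : nat -> nat := crec 0 N_step.

Definition cond_v (g : nat -> natinf) (k m e : nat) : bool :=
  match g (k - e + 1) with
  | None => true                 (* +oo + e >= m *)
  | Some v => m <= v + e
  end.

Definition pdp (g : nat -> natinf) (k m e0 e1 : nat) : bool :=
  [&& 2 <= e0, 2 <= e1, e0 <= k, e1 <= k, e0 + e1 == m, e0 <= e1,
      cond_v g k m e0 & cond_v g k m e1].

(* pdp_g(k,m) is nonempty (any element has e0, e1 <= m) *)
Definition pdp_ne (g : nat -> natinf) (k m : nat) : bool :=
  has (fun e0 => has (fun e1 => pdp g k m e0 e1) (iota 0 m.+1)) (iota 0 m.+1).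

Definition max_m (g : nat -> natinf) (k : nat) : nat :=
  \max_(4 <= m < (2 * k).+1 | pdp_ne g k m) m.

Definition minf (m : nat) (x : natinf) : natinf :=
  match x with None => Some m | Some v => Some (minn m v) end.

Definition nM_step (f : nat -> natinf) (g : nat -> natinf) (k : nat) : natinf :=
  if k <= 1 then Some 2 else minf (max_m g k) (f k).

Definition nM (f : nat -> natinf) : nat -> natinf := crec None (nM_step f).

Definition two_fun (k : nat) : natinf := if k == 1 then Some 2 else None.

From mathcomp Require Import all_boot.
From mathcomp Require Import zify.

Set Implicit Arguments.
Unset Strict Implicit.

(* Two facts about N drive everything: it is strictly increasing, so that
   N(a) + d <= N(a + d); and N(k) is attained as min(2i, N(k-i+1)+i) for some
   i in [2, k].  For g = N the pair (N(k) - i, i) then lies in pdp_N(k, N(k)),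
   while every (e0, e1) in pdp_N(k, m) has m <= min(2 e1, N(k-e1+1)+e1) <= N(k).
   Hence max_m N k = N k, and by course-of-values induction nM(f) = N for
   every f that is pointwise at least N, in particular for f = [2] and f = N. *)

Section CourseOfValues.

Variables (T : Type) (d : T) (step : (nat -> T) -> nat -> T).

Lemma size_tab n : size (tab d step n) = n.
Proof. by elim: n => //= n IH; rewrite size_rcons IH. Qed.

Lemma nth_tab n j : j < n -> nth d (tab d step n) j = crec d step j.
Proof.
elim: n => // n IH lt_jn /=; rewrite nth_rcons size_tab.
case: (ltnP j n) => [lt_jn' | le_nj]; first exact: IH.
have -> : j = n by lia.
by rewrite /crec /= nth_rcons size_tab ltnn eqxx.
Qed.

Lemma crec_unfold k :
  (forall g g', (forall j, 1 <= j < k -> g j = g' j) -> step g k = step g' k) ->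
  crec d step k = step (crec d step) k.
Proof.
move=> step_local; rewrite /crec /= nth_rcons size_tab ltnn eqxx.
by apply: step_local => j /andP[_ lt_jk]; apply: nth_tab.
Qed.

End CourseOfValues.

Lemma bigmax_seq_attained (I : eqType) (r : seq I) (F : I -> nat) :
  r != [::] -> exists2 i, i \in r & \max_(j <- r) F j = F i.
Proof.
elim: r => // a [|b r] IH _; first by exists a; rewrite ?big_seq1 ?mem_head.
rewrite big_cons; have [i r_i ->] := IH isT.
by case: (leqP (F i) (F a)) => _; [exists a | exists i];
  rewrite // ?mem_head // inE r_i orbT.
Qed.

Lemma Nfun_rec k : Nfun k = N_step Nfun k.
Proof.
apply: crec_unfold => g g' eq_gg'; rewrite /N_step; case: (k <= 1) => //.
by apply: eq_big_seq => i; rewrite mem_index_iota => i_in; rewrite eq_gg' //; lia.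
Qed.

Lemma Nfun1 : Nfun 1 = 2.
Proof. by []. Qed.

Lemma Nfun_ge_min k i :
  2 <= i <= k -> minn (2 * i) (Nfun (k - i + 1) + i) <= Nfun k.
Proof.
move=> i_in; rewrite (Nfun_rec k) /N_step ifN; last by apply/negP; lia.
by apply: (@leq_bigmax_seq _ _ xpredT (fun i => minn (2 * i) (Nfun (k - i + 1) + i)) i);
  rewrite // mem_index_iota; lia.
Qed.

Lemma Nfun_attained k : 2 <= k ->
  exists2 i, 2 <= i <= k & Nfun k = minn (2 * i) (Nfun (k - i + 1) + i).
Proof.
move=> k_ge2; rewrite Nfun_rec /N_step ifN; last by rewrite -ltnNge.
have [|i] := @bigmax_seq_attained _ (index_iota 2 k.+1) (fun i => minn (2 * i) (Nfun (k - i + 1) + i)).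
  by rewrite -size_eq0 size_iota; lia.
by rewrite mem_index_iota => i_in ->; exists i => //; lia.
Qed.

Lemma Nfun_ge2 k : 1 <= k -> 2 <= Nfun k.
Proof.
move=> k_gt0; case: (leqP k 1) => [k_le1 | k_gt1]; first by have -> : k = 1 by lia.
by have := @Nfun_ge_min k 2 ltac:(lia); lia.
Qed.

Lemma Nfun_lt_succ j : 1 <= j -> Nfun j < Nfun j.+1.
Proof.
move=> j_gt0; case: (leqP j 1) => [j_le1 | j_gt1].
  have -> : j = 1 by lia.
  by have := @Nfun_ge_min 2 2 isT; rewrite Nfun1; lia.
have [i i_in ->] := Nfun_attained j_gt1.
by have := @Nfun_ge_min j.+1 i.+1 ltac:(lia); rewrite subSS; lia.
Qed.

Lemma Nfun_add a n : 1 <= a -> Nfun a + n <= Nfun (a + n).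
Proof.
move=> a_gt0; elim: n => [|n IH]; first by rewrite !addn0.
by have := @Nfun_lt_succ (a + n) ltac:(lia); rewrite !addnS; lia.
Qed.

Lemma pdp_local g g' k m e0 e1 :
  (forall j, 1 <= j < k -> g j = g' j) -> pdp g k m e0 e1 = pdp g' k m e0 e1.
Proof.
move=> eq_gg'; rewrite /pdp /cond_v.
case: (leqP 2 e0) => //= e0_ge2; case: (leqP 2 e1) => //= e1_ge2.
case: (leqP e0 k) => //= e0_le; case: (leqP e1 k) => //= e1_le.
by rewrite !eq_gg' //; lia.
Qed.

Lemma max_m_local g g' k :
  (forall j, 1 <= j < k -> g j = g' j) -> max_m g k = max_m g' k.
Proof.
move=> eq_gg'; apply: eq_bigl => m.
by apply: eq_has => e0; apply: eq_has => e1; apply: pdp_local.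
Qed.

Definition Nfun_inf (k : nat) : natinf := Some (Nfun k).

Lemma pdp_Nfun_le k m e0 e1 : pdp Nfun_inf k m e0 e1 -> m <= Nfun k.
Proof.
rewrite /pdp /cond_v => /and5P[_ e1_ge2 _ e1_le /and4P[/eqP <- le_e01 _ bound1]].
by have := @Nfun_ge_min k e1 ltac:(lia); lia.
Qed.

(* The second component i is the maximiser of N(k); the first, N(k) - i,
   satisfies condition (v) because N(k-i+1) + i <= N(k - (N(k)-i) + 1). *)
Lemma pdp_Nfun_attained k : 2 <= k ->
  exists e0 e1, pdp Nfun_inf k (Nfun k) e0 e1.
Proof.
move=> k_ge2; have [i i_in Nk] := Nfun_attained k_ge2.
have N_ge2 := @Nfun_ge2 (k - i + 1) ltac:(lia).
have shift := @Nfun_add (k - i + 1) (i - (Nfun k - i)) ltac:(lia).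
rewrite (_ : k - i + 1 + _ = k - (Nfun k - i) + 1) in shift; last by lia.
exists (Nfun k - i), i; rewrite /pdp /cond_v.
by apply/and5P; split; try apply/and4P; try split; apply/idP; lia.
Qed.

Lemma max_m_ge g k m e0 e1 : pdp g k m e0 e1 -> m <= max_m g k.
Proof.
move=> /[dup] pdp_e /and5P[? ? ? ? /and4P[/eqP sum_e ? ? ?]].
apply: (@leq_bigmax_seq _ _ _ id m); first by rewrite mem_index_iota; lia.
by apply/hasP; exists e0; last (apply/hasP; exists e1); rewrite // mem_iota; lia.
Qed.

Lemma max_m_Nfun k : 2 <= k -> max_m Nfun_inf k = Nfun k.
Proof.
move=> k_ge2; have [e0 [e1 pdp_e]] := pdp_Nfun_attained k_ge2.
apply/eqP; rewrite eqn_leq (max_m_ge pdp_e) andbT.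
by apply/bigmax_leqP_seq => m _ /hasP[e0' _ /hasP[e1' _]]; apply: pdp_Nfun_le.
Qed.

Lemma nM_rec f k : nM f k = nM_step f (nM f) k.
Proof.
apply: crec_unfold => g g' eq_gg'; rewrite /nM_step.
by case: (k <= 1) => //; rewrite (max_m_local eq_gg').
Qed.

Lemma nM_Nfun f :
  (forall k, 2 <= k -> minf (Nfun k) (f k) = Some (Nfun k)) ->
  forall k, 1 <= k -> nM f k = Nfun_inf k.
Proof.
move=> f_ge_N; elim/ltn_ind => k IH k_gt0.
rewrite nM_rec /nM_step; case: (leqP k 1) => [k_le1 | k_gt1].
  by have -> : k = 1 by lia.
rewrite (@max_m_local _ Nfun_inf) => [|j j_in]; last by apply: IH; lia.
by rewrite max_m_Nfun ?f_ge_N.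
Qed.

Theorem theorem13p15 :
  forall k : nat, 1 <= k ->
    nM two_fun k = nM (fun j => Some (Nfun j)) k /\
    nM (fun j => Some (Nfun j)) k = Some (Nfun k).
Proof.
move=> k k_gt0.
have two_ge_N j : 2 <= j -> minf (Nfun j) (two_fun j) = Some (Nfun j).
  by move=> j_ge2; rewrite /two_fun ifN //; apply/eqP; lia.
have N_ge_N j : 2 <= j -> minf (Nfun j) (Nfun_inf j) = Some (Nfun j).
  by rewrite /= minnn.
by rewrite (nM_Nfun two_ge_N) // (nM_Nfun N_ge_N).
Qed.
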